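(* For any BT partition sort algorithm $\mathcal{A}$ that sorts the permutation $\pi$ using $\mathcal{A}(\pi)$ accesses, there is a BST mergesort algorithm $\mathcal{B}$ that sorts the permutation $\pi^{-1}$ using $\mathcal{B}(\pi^{-1})=\mathcal{A}(\pi)$ accesses; and conversely, for any BST mergesort algorithm $\mathcal{B}$ sorting $\pi^{-1}$ using $\mathcal{B}(\pi^{-1})$ accesses there is a BT partition sort algorithm $\mathcal{A}$ sorting $\pi$ with $\mathcal{A}(\pi)=\mathcal{B}(\pi^{-1})$ accesses.
   Context: A top tree of a binary tree $T$ is a connected set of nodes containing the root. BST merge: given BSTs $T_A,T_B$ with disjoint keys, for some top trees $\tau_a$ of $T_A$, $\tau_b$ of $T_B$, it returns a BST $T$ on the union of keys such that for some top tree $\tau$ of $T$, $\tau=\tau_a\cup\tau_b$, the subtrees hanging off $\tau$ are unchanged subtrees of $T_A$ or $T_B$, and $\tau$ contains the block boundaries (in the sorted merged order, blocks are maximal contiguous runs of keys from the same input; boundaries are their first and last keys). Number of accesses: $|\tau|$. BST mergesort: on input of size 1 returns it; otherwise splits the input sequence into two contiguous nonempty parts, recursively sorts each by BST mergesort, BST-merges the results; accesses are summed over all merges. BT partition: given a binary tree (BT) $T$ (its left-to-right order of keys represents input order), for some top tree $\tau$ of $T$ returns two nonempty BTs $T_A,T_B$ with distinct keys such that for some top trees $\tau_a,\tau_b$ of them $\tau=\tau_a\cup\tau_b$, the other subtrees of $T$ appear unchanged in $T_A$ or $T_B$, $\tau$ contains the block boundaries (blocks: maximal contiguous runs in the left-to-right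 order of $T$ sent to the same output), and the left-to-right orders of $T_A$, $T_B$ are subsequences of that of $T$. Number of accesses: $|\tau|$. BT partition sort: on a BT of size one stops; otherwise BT-partitions $T$ into $T_a,T_b$ with, for some key $k$, keys of $T_a$ all $<k$ and keys of $T_b$ all $\ge k$, recurses, and appends; it sorts $\pi$ when started on a BT with left-to-right order $\pi$; accesses are summed over all partitions. *)

From HB Require Import structures.
From mathcomp Require Import all_boot all_fingroup.
Set Implicit Arguments. Unset Strict Implicit. Unset Printing Implicit Defensive.

(* Binary trees with nat keys; a node is identified with its key
   (keys are always distinct in the trees we consider). *)
Inductive bt := Leaf | Node of bt & nat & bt.

Fixpoint eqbt (t1 t2 : bt) : bool :=
  match t1, t2 with
  | Leaf, Leaf => true
  | Node l1 k1 r1, Node l2 k2 r2 => [&& eqbt l1 l2, k1 == k2 & eqbt r1 r2]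
  | _, _ => false
  end.

Lemma eqbtP : Equality.axiom eqbt.
Proof.
elim=> [|l1 IHl k1 r1 IHr] [|l2 k2 r2] /=; try by constructor.
apply: (iffP and3P) => [[/IHl -> /eqP -> /IHr ->]|[<- <- <-]] //.
by split=> //; [apply/IHl | apply/IHr].
Qed.

HB.instance Definition _ := hasDecEq.Build bt eqbtP.

Fixpoint inorder (t : bt) : seq nat :=
  if t is Node l k r then inorder l ++ k :: inorder r else [::].

Definition bst (t : bt) : bool := sorted ltn (inorder t).

(* top_in S t : the nodes of t lying in S form either nothing or a
   connected set containing the root of t *)
Fixpoint top_in (S : seq nat) (t : bt) : bool :=
  if t is Node l k r then
    if k \in S then top_in S l && top_in S r
    else all (fun x => x \notin S) (inorder t)
  else true.

Definition top_tree (S : seq nat) (t : bt) : bool :=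
  [&& (if t is Node _ k _ then k \in S else false), top_in S t
    & all (fun x => x \in inorder t) S].

Definition tsize (S : seq nat) (t : bt) : nat := count (fun x => x \in S) (inorder t).

Fixpoint hang (S : seq nat) (t : bt) : seq bt :=
  if t is Node l k r then
    if k \in S then hang S l ++ hang S r else [:: t]
  else [::].

(* block boundaries of the sequence s, where inA says which block an element
   is sent to / comes from: first and last elements, and both elements of
   every adjacent pair with different origins *)
Fixpoint pair_bnd (inA : nat -> bool) (s : seq nat) : seq nat :=
  match s with
  | x :: ((y :: _) as t) =>
      (if inA x != inA y then [:: x; y] else [::]) ++ pair_bnd inA t
  | _ => [::]
  end.

Definition boundaries (inA : nat -> bool) (s : seq nat) : seq nat :=
  take 1 s ++ drop (size s).-1 s ++ pair_bnd inA s.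

Definition bst_merge (tA tB t : bt) (c : nat) : Prop :=
  [/\ bst tA, bst tB, bst t,
      perm_eq (inorder t) (inorder tA ++ inorder tB) &
      exists tauA tauB tau : seq nat,
        [/\ [&& top_tree tauA tA, top_tree tauB tB & top_tree tau t],
            tau =i tauA ++ tauB,
            all (fun h => h \in hang tauA tA ++ hang tauB tB) (hang tau t),
            all (fun x => x \in tau)
                (boundaries (fun x => x \in inorder tA)
                            (sort leq (inorder tA ++ inorder tB)))
          & c = tsize tau t]].

Inductive msort : seq nat -> bt -> nat -> Prop :=
  | msort1 x : msort [:: x] (Node Leaf x Leaf) 0
  | msortS s1 s2 t1 t2 t c1 c2 c :
      s1 != [::] -> s2 != [::] ->
      msort s1 t1 c1 -> msort s2 t2 c2 -> bst_merge t1 t2 t c ->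
      msort (s1 ++ s2) t (c1 + c2 + c).

Definition bt_partition (t tA tB : bt) (c : nat) : Prop :=
  [/\ [&& uniq (inorder t), tA != Leaf & tB != Leaf],
      perm_eq (inorder t) (inorder tA ++ inorder tB),
      subseq (inorder tA) (inorder t), subseq (inorder tB) (inorder t) &
      exists tau tauA tauB : seq nat,
        [/\ [&& top_tree tau t, top_tree tauA tA & top_tree tauB tB],
            tau =i tauA ++ tauB,
            all (fun h => h \in hang tauA tA ++ hang tauB tB) (hang tau t),
            all (fun x => x \in tau)
                (boundaries (fun x => x \in inorder tA) (inorder t))
          & c = tsize tau t]].

Inductive psort : bt -> nat -> Prop :=
  | psort1 x : psort (Node Leaf x Leaf) 0
  | psortS t tA tB c cA cB :
      bt_partition t tA tB c ->
      (exists k, all (fun a => a < k) (inorder tA) /\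
                 all (fun b => k <= b) (inorder tB)) ->
      psort tA cA -> psort tB cB ->
      psort t (c + cA + cB).

Definition perm_seq n (p : {perm 'I_n}) : seq nat := [seq val (p i) | i <- enum 'I_n].

(* Relabelling the keys of a tree by an injective map changes neither its shape nor
   its top trees, hanging subtrees, access counts and block boundaries, only the
   order of the keys.  Relabelling by pi^-1 turns a tree whose
   left-to-right order is pi into a BST on the positions, and a BT partition that
   splits the keys at a threshold k into a BST merge whose inputs hold the first k
   entries of the sequence pi^-1 and the remaining ones.  Conversely, relabelling a
   mergesort run on pi^-1 by pi gives a partition-sort run on pi, the split point of
   the input giving the threshold. *)
From Pilot Require Import Defs.
From HB Require Import structures.
From mathcomp Require Import all_boot all_fingroup.
Set Implicit Arguments. Unset Strict Implicit. Unset Printing Implicit Defensive.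

Lemma inorder_eq0 t : (inorder t == [::]) = (t == Leaf).
Proof. by case: t => //= l k r; case: (inorder l). Qed.

Lemma sorted_subset_subseq (T : eqType) (r : rel T) (s1 s2 : seq T) :
  transitive r -> irreflexive r ->
  sorted r s1 -> sorted r s2 -> {subset s1 <= s2} -> subseq s1 s2.
Proof.
move=> r_trans r_irr s1_sorted s2_sorted s12.
have <- : filter (mem s1) s2 = s1.
  apply: (irr_sorted_eq r_trans r_irr) => //; first exact: sorted_filter.
  by move=> x; rewrite mem_filter andb_idr //; apply: s12.
exact: filter_subseq.
Qed.

Lemma sort_perm_sorted_ltn (s s' : seq nat) :
  sorted ltn s -> perm_eq s s' -> sort leq s' = s.
Proof.
move=> s_sorted ss'; apply: (sorted_eq leq_trans anti_leq).
- exact: sort_sorted leq_total _.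
- by move: s_sorted; rewrite ltn_sorted_uniq_leq => /andP[].
- by rewrite perm_sort perm_sym.
Qed.

Lemma sort_perm_cat_sep (s a b : seq nat) k :
  perm_eq s (a ++ b) -> all (fun x => x < k) a -> all (fun y => k <= y) b ->
  sort leq s = sort leq a ++ sort leq b.
Proof.
move=> sab a_lt b_ge; apply: (sorted_eq leq_trans anti_leq).
- exact: sort_sorted leq_total _.
- rewrite (sorted_pairwise leq_trans) pairwise_cat.
  rewrite -!(sorted_pairwise leq_trans) !(sort_sorted leq_total) !andbT.
  apply/allrelP => x y; rewrite !mem_sort => xa yb.
  exact: ltnW (leq_trans (allP a_lt x xa) (allP b_ge y yb)).
- by rewrite perm_sort (perm_trans sab) // perm_sym perm_cat // perm_sort.
Qed.

Lemma sorted_ltn_cat_sep (a b : seq nat) : sorted ltn (a ++ b) -> b != [::] ->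
  exists k, all (fun x => x < k) a /\ all (fun y => k <= y) b.
Proof.
case: b => // y b; rewrite (sorted_pairwise ltn_trans) pairwise_cat /=.
case/and4P=> /allrelP ab_lt _ y_lt _; exists y; split.
- by apply/allP => x xa; apply: ab_lt; rewrite ?mem_head.
- by rewrite /= leqnn; apply/allP => z zb; apply: ltnW; apply: (allP y_lt).
Qed.

Fixpoint relabel (f : nat -> nat) (t : bt) : bt :=
  if t is Node l k r then Node (relabel f l) (f k) (relabel f r) else Leaf.

Section Relabel.
Variable f : nat -> nat.
Hypothesis f_inj : injective f.

Lemma inorder_relabel t : inorder (relabel f t) = map f (inorder t).
Proof. by elim: t => //= l IHl k r IHr; rewrite IHl IHr map_cat. Qed.

Lemma relabel_inj : injective (relabel f).
Proof. by elim=> [|l IHl k r IHr] [|l' k' r'] //= [/IHl -> /f_inj -> /IHr ->]. Qed.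

Lemma relabel_eq_Leaf t : (relabel f t == Leaf) = (t == Leaf).
Proof. by case: t. Qed.

Lemma all_mem_map (S s : seq nat) :
  all (fun x => x \in map f S) (map f s) = all (fun x => x \in S) s.
Proof. by rewrite all_map; apply: eq_all => x /=; rewrite (mem_map f_inj). Qed.

Lemma top_in_relabel S t : top_in (map f S) (relabel f t) = top_in S t.
Proof.
elim: t => //= l IHl k r IHr; rewrite (mem_map f_inj) IHl IHr.
case: (k \in S) => //; rewrite !inorder_relabel -map_cons -map_cat all_map.
by apply: eq_all => x /=; rewrite (mem_map f_inj).
Qed.

Lemma top_tree_relabel S t : top_tree (map f S) (relabel f t) = top_tree S t.
Proof.
rewrite /top_tree top_in_relabel inorder_relabel all_mem_map.
by case: t => //= l k r; rewrite (mem_map f_inj).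
Qed.

Lemma hang_relabel S t : hang (map f S) (relabel f t) = map (relabel f) (hang S t).
Proof.
elim: t => //= l IHl k r IHr; rewrite (mem_map f_inj).
by case: (k \in S); rewrite //= IHl IHr map_cat.
Qed.

Lemma tsize_relabel S t : Defs.tsize (map f S) (relabel f t) = Defs.tsize S t.
Proof.
rewrite /Defs.tsize inorder_relabel count_map; apply: eq_count => x /=.
by rewrite (mem_map f_inj).
Qed.

Lemma boundaries_relabel (P Q : nat -> bool) s :
  (forall x, Q (f x) = P x) -> boundaries Q (map f s) = map f (boundaries P s).
Proof.
move=> QfP; have pair_bnd_map u : pair_bnd Q (map f u) = map f (pair_bnd P u).
  elim: u => [|x [|y u] IH] //; rewrite [map f _]/= /= map_cat -IH /= !QfP.
  by case: ifP.
by rewrite /boundaries !map_cat map_take map_drop size_map pair_bnd_map.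
Qed.

Lemma hang_sub_relabel t tA tB tau tauA tauB :
  all (fun h => h \in hang tauA tA ++ hang tauB tB) (hang tau t) ->
  all (fun h => h \in hang (map f tauA) (relabel f tA) ++ hang (map f tauB) (relabel f tB))
      (hang (map f tau) (relabel f t)).
Proof.
move=> hang_sub; rewrite !hang_relabel -map_cat all_map; apply/allP => h h_in /=.
by rewrite (mem_map relabel_inj); apply: (allP hang_sub).
Qed.

Lemma bt_partition_relabel t tA tB c :
  sorted ltn (map f (inorder t)) -> bt_partition t tA tB c ->
  bst_merge (relabel f tA) (relabel f tB) (relabel f t) c.
Proof.
move=> t_sorted [_ t_perm subA subB [tau [tauA [tauB [tops tau_split hang_sub bnd ->]]]]].
have bst_sub u : subseq (inorder u) (inorder t) -> bst (relabel f u).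
  by move=> sub; rewrite /bst inorder_relabel (subseq_sorted ltn_trans _ t_sorted) ?map_subseq.
have t'_perm : perm_eq (inorder (relabel f t))
                       (inorder (relabel f tA) ++ inorder (relabel f tB)).
  by rewrite !inorder_relabel -map_cat perm_map.
split; rewrite ?bst_sub //; exists (map f tauA), (map f tauB), (map f tau).
split.
- by rewrite !top_tree_relabel; case/and3P: tops => -> -> ->.
- by rewrite -map_cat; apply: eq_mem_map.
- exact: hang_sub_relabel.
- rewrite (sort_perm_sorted_ltn _ t'_perm) ?inorder_relabel //.
  rewrite (boundaries_relabel (P := fun x => x \in inorder tA)) ?all_mem_map //.
  by move=> x; rewrite (mem_map f_inj).
- by rewrite tsize_relabel.
Qed.

Lemma bst_merge_relabel tA tB t c : tA != Leaf -> tB != Leaf ->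
  bst_merge tA tB t c -> bt_partition (relabel f t) (relabel f tA) (relabel f tB) c.
Proof.
move=> tA0 tB0 [bstA bstB bst_t t_perm [tauA [tauB [tau [tops tau_split hang_sub bnd ->]]]]].
have sub_t u : bst u -> {subset inorder u <= inorder tA ++ inorder tB} ->
    subseq (inorder (relabel f u)) (inorder (relabel f t)).
  move=> bst_u u_sub; rewrite !inorder_relabel map_subseq //.
  by apply: sorted_subset_subseq ltn_trans ltnn _ _ _ => // x /u_sub; rewrite (perm_mem t_perm).
split.
- rewrite !relabel_eq_Leaf tA0 tB0 inorder_relabel (map_inj_uniq f_inj).
  by rewrite (sorted_uniq ltn_trans ltnn bst_t).
- by rewrite !inorder_relabel -map_cat perm_map.
- by apply: sub_t => // x xA; rewrite mem_cat xA.
- by apply: sub_t => // x xB; rewrite mem_cat xB orbT.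
exists (map f tau), (map f tauA), (map f tauB).
split.
- by rewrite !top_tree_relabel; case/and3P: tops => -> -> ->.
- by rewrite -map_cat; apply: eq_mem_map.
- exact: hang_sub_relabel.
- rewrite !inorder_relabel -(sort_perm_sorted_ltn bst_t t_perm).
  rewrite (boundaries_relabel (P := fun x => x \in inorder tA)) ?all_mem_map //.
  by move=> x; rewrite (mem_map f_inj).
- by rewrite tsize_relabel.
Qed.

Lemma psort_msort t c : psort t c -> sorted ltn (map f (inorder t)) ->
  msort (map f (sort leq (inorder t))) (relabel f t) c.
Proof.
elim=> [x|{}t tA tB {}c cA cB part [k [A_lt B_ge]] _ IHA _ IHB] t_sorted.
  exact: msort1.
have [/and3P[_ tA0 tB0] t_perm subA subB _] := part.
have sortedA := subseq_sorted ltn_trans (map_subseq f subA) t_sorted.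
have sortedB := subseq_sorted ltn_trans (map_subseq f subB) t_sorted.
have ne0 u : u != Leaf -> map f (sort leq (inorder u)) != [::].
  by rewrite -!size_eq0 size_map size_sort size_eq0 inorder_eq0.
rewrite (sort_perm_cat_sep t_perm A_lt B_ge) map_cat -addnA addnC.
apply: msortS (IHA sortedA) (IHB sortedB) _; rewrite ?ne0 //.
exact: bt_partition_relabel part.
Qed.

Lemma msort_bst_perm s t c : msort s t c -> bst t /\ perm_eq (inorder t) s.
Proof.
elim=> [x|s1 s2 t1 t2 {}t c1 c2 {}c _ _ _ [_ perm1] _ [_ perm2] [_ _ bst_t t_perm _]] //.
by split=> //; rewrite (perm_trans t_perm) ?perm_cat.
Qed.

Lemma msort_psort s t c : msort s t c -> sorted ltn (map f s) ->
  psort (relabel f t) c.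
Proof.
elim=> [x|s1 s2 t1 t2 {}t c1 c2 {}c s1_0 s2_0 sort1 IH1 sort2 IH2 merge] s_sorted.
  exact: psort1.
have [[_ perm1] [_ perm2]] := (msort_bst_perm sort1, msort_bst_perm sort2).
have ne0 u s' : perm_eq (inorder u) s' -> s' != [::] -> u != Leaf.
  by move=> u_perm; rewrite -!size_eq0 -(perm_size u_perm) size_eq0 inorder_eq0.
move: (s_sorted); rewrite map_cat (sorted_pairwise ltn_trans) pairwise_cat.
rewrite -!(sorted_pairwise ltn_trans) => /and3P[_ sorted1 sorted2].
rewrite addnC addnA; apply: psortS (IH1 sorted1) (IH2 sorted2).
  exact: bst_merge_relabel (ne0 _ _ perm1 s1_0) (ne0 _ _ perm2 s2_0) merge.
rewrite !inorder_relabel.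
have f_s2_0 : map f s2 != [::] by rewrite -size_eq0 size_map size_eq0.
have f_s_sorted : sorted ltn (map f s1 ++ map f s2) by rewrite -map_cat.
have [k [lt_k ge_k]] := sorted_ltn_cat_sep f_s_sorted f_s2_0.
exists k; rewrite (eq_all_r (perm_mem (perm_map f perm1))).
by rewrite (eq_all_r (perm_mem (perm_map f perm2))).
Qed.

End Relabel.

Definition perm_ext n (p : {perm 'I_n}) (v : nat) : nat :=
  odflt v (omap (fun i : 'I_n => val (p i)) (insub v)).

Lemma perm_ext_val n (p : {perm 'I_n}) (i : 'I_n) : perm_ext p (val i) = val (p i).
Proof. by rewrite /perm_ext valK. Qed.

Lemma perm_ext_inj n (p : {perm 'I_n}) : injective (perm_ext p).
Proof.
move=> x y; rewrite /perm_ext.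
case: insubP => [i _ <-|x_out]; case: insubP => [j _ <-|y_out] //=.
- by move/val_inj/perm_inj => ->.
- by move=> ey; move: y_out; rewrite -ey ltn_ord.
- by move=> ex; move: x_out; rewrite ex ltn_ord.
Qed.

Lemma perm_seq1 n : perm_seq (1 : {perm 'I_n}) = iota 0 n.
Proof. by rewrite -val_enum_ord; apply: eq_map => i; rewrite perm1. Qed.

Lemma map_perm_ext_perm_seq n (p q : {perm 'I_n}) :
  map (perm_ext q) (perm_seq p) = perm_seq (p * q).
Proof. by rewrite -map_comp; apply: eq_map => i /=; rewrite perm_ext_val permM. Qed.

Lemma sort_perm_seq n (p : {perm 'I_n}) : sort leq (perm_seq p) = iota 0 n.
Proof.
apply: sort_perm_sorted_ltn; first exact: iota_ltn_sorted.
rewrite perm_sym -val_enum_ord /perm_seq (map_comp val p) perm_map //.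
apply: uniq_perm; rewrite ?(map_inj_uniq (@perm_inj _ p)) ?enum_uniq //.
by move=> x; rewrite mem_enum -[x](permKV p) map_f ?mem_enum.
Qed.

Theorem lemma2 (n : nat) (pi : {perm 'I_n}) (c : nat) :
  (exists t, inorder t = perm_seq pi /\ psort t c) <->
  (exists t, msort (perm_seq (pi^-1)%g) t c).
Proof.
split=> [[t [t_pi psort_t]] | [t msort_t]].
- exists (relabel (perm_ext pi^-1) t).
  have := psort_msort (@perm_ext_inj _ pi^-1) psort_t.
  rewrite t_pi sort_perm_seq -perm_seq1 !map_perm_ext_perm_seq mulgV mul1g.
  by apply; rewrite perm_seq1 iota_ltn_sorted.
- have [bst_t t_perm] := msort_bst_perm msort_t.
  have t_iota : inorder t = perm_seq (1 : {perm 'I_n}).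
    by rewrite perm_seq1 -(sort_perm_seq pi^-1) (sort_perm_sorted_ltn bst_t).
  exists (relabel (perm_ext pi) t).
  rewrite inorder_relabel t_iota map_perm_ext_perm_seq mul1g; split=> //.
  apply: (msort_psort (@perm_ext_inj _ pi) msort_t).
  by rewrite map_perm_ext_perm_seq mulVg perm_seq1 iota_ltn_sorted.
Qed.
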